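(* Let $S$ be an infinite supernatural number, $\lambda$ a non-archimedean length function on $\widetilde{\mathbb Z_S}$ that grows fast enough, and $\varphi:\mathbb Z_S\to\mathbb Z_S$, $\varphi(x)=x+1$. For $f\in C_{RD}(\mathbb Z_S)$ we have $\int_{\mathbb Z_S}f\,dx=0$ if and only if there exists $g\in C_{RD}(\mathbb Z_S)$ with $f=g\circ\varphi-g$.
   Context: Odometer $\mathbb Z_S=\varprojlim\mathbb Z/s_m\mathbb Z$ for a scale $(s_m)_{m\ge1}$ (positive integers, $s_m\mid s_{m+1}$, $s_m<s_{m+1}$) with $S=\mathrm{lcm}(s_m)$ infinite; $1=(1,1,\dots)$ generates a dense cyclic subgroup; $dx$ is normalized Haar measure. $\widetilde{\mathbb Z_S}=\{z\in\mathbb C:z^s=1\text{ for some } s\mid S\}$; $\chi_z$ is the character with $\chi_z(1)=z$; $\hat f_z=\int f\chi_{\bar z}\,dx$. A non-archimedean length function is $\lambda:\widetilde{\mathbb Z_S}\to[1,\infty)$ with (i) $\lambda(z)=1$ iff $z=1$; (ii) $\lambda(z_1z_2)\le\max\{\lambda(z_1),\lambda(z_2)\}$; (iii) $\{z:\lambda(z)\le r\}$ finite for all $r\ge1$; it grows fast enough if $\lambda(z)\ge c\,(\mathrm{ord}(z))^\alpha$ for some $\alpha,c>0$ and all $z$. $\|f\|_N=\sum_z|\hat f_z|\lambda(z)^N$ and $C_{RD}(\mathbb Z_S)=\{f\in C(\mathbb Z_S):\|f\|_N<\infty\ \forall N\ge 0\}$. *)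

From Stdlib Require Import Reals Lra Lia Arith PeanoNat List ClassicalEpsilon.
From Coquelicot Require Import Coquelicot.
Open Scope R_scope.

(** A scale (s_m)_m : positive integers, s_m | s_{m+1}, s_m < s_{m+1}
    (indexed from 0 instead of 1).  S = lcm(s_m) is then automatically an
    infinite supernatural number. *)
Record scale := Scale {
  sc : nat -> nat;
  sc_pos : forall m, (0 < sc m)%nat;
  sc_dvd : forall m, Nat.divide (sc m) (sc (S m));
  sc_lt  : forall m, (sc m < sc (S m))%nat
}.

(** The odometer Z_S = inverse limit of Z/s_m Z, elements are compatible
    sequences of residues. *)
Record ZS (s : scale) := MkZS {
  zs : nat -> nat;
  zs_lt : forall m, (zs m < sc s m)%nat;
  zs_coh : forall m, zs m = Nat.modulo (zs (S m)) (sc s m)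
}.
Arguments zs {s} _ _.
Arguments MkZS {s} _ _ _.

Lemma mod_mod_dvd (a b c : nat) : Nat.divide c b ->
  Nat.modulo (Nat.modulo a b) c = Nat.modulo a c.
Proof.
  intros [k ->].
  rewrite (Nat.div_mod_eq a (k * c)) at 2.
  replace (k * c * (a / (k * c)))%nat with ((k * (a / (k * c))) * c)%nat by ring.
  rewrite Nat.add_comm, Nat.Div0.mod_add. reflexivity.
Qed.

Lemma zadd_lt (s : scale) (x y : ZS s) m :
  (Nat.modulo (zs x m + zs y m) (sc s m) < sc s m)%nat.
Proof. apply Nat.mod_upper_bound. pose proof (sc_pos s m); lia. Qed.

Lemma zadd_coh (s : scale) (x y : ZS s) m :
  Nat.modulo (zs x m + zs y m) (sc s m) =
  Nat.modulo (Nat.modulo (zs x (S m) + zs y (S m)) (sc s (S m))) (sc s m).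
Proof.
  pose proof (sc_pos s m) as H0. pose proof (sc_pos s (S m)) as H1.
  rewrite (mod_mod_dvd _ _ _ (sc_dvd s m)).
  rewrite (zs_coh s x m), (zs_coh s y m).
  rewrite <- Nat.Div0.add_mod. reflexivity.
Qed.

Definition zadd (s : scale) (x y : ZS s) : ZS s :=
  MkZS (fun m => Nat.modulo (zs x m + zs y m) (sc s m))
       (zadd_lt s x y) (zadd_coh s x y).

Lemma zone_lt (s : scale) m : (Nat.modulo 1 (sc s m) < sc s m)%nat.
Proof. apply Nat.mod_upper_bound. pose proof (sc_pos s m); lia. Qed.

Lemma zone_coh (s : scale) m :
  Nat.modulo 1 (sc s m) = Nat.modulo (Nat.modulo 1 (sc s (S m))) (sc s m).
Proof.
  pose proof (sc_pos s m). pose proof (sc_pos s (S m)).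
  rewrite (mod_mod_dvd _ _ _ (sc_dvd s m)). reflexivity.
Qed.

Definition zone (s : scale) : ZS s :=
  MkZS (fun m => Nat.modulo 1 (sc s m)) (zone_lt s) (zone_coh s).

Definition phi (s : scale) (x : ZS s) : ZS s := zadd s x (zone s).

(** Continuity of f : Z_S -> C for the inverse-limit topology (basic
    neighbourhoods of x are the cylinders {y | y_m = x_m}). *)
Definition Zcont (s : scale) (f : ZS s -> C) : Prop :=
  forall (x : ZS s) (eps : R), 0 < eps ->
    exists m : nat, forall y : ZS s, zs y m = zs x m ->
      Cmod (Cminus (f y) (f x)) < eps.

Definition is_haar_integral (s : scale) (I : (ZS s -> C) -> C) : Prop :=
  (forall (a : C) (f g : ZS s -> C), Zcont s f -> Zcont s g ->
      I (fun x => Cplus (Cmult a (f x)) (g x)) = Cplus (Cmult a (I f)) (I g)) /\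
  (forall f : ZS s -> C, Zcont s f ->
      (forall x, Im (f x) = 0 /\ 0 <= Re (f x)) ->
      Im (I f) = 0 /\ 0 <= Re (I f)) /\
  I (fun _ => RtoC 1) = RtoC 1 /\
  (forall (a : ZS s) (f : ZS s -> C), Zcont s f ->
      I (fun x => f (zadd s x a)) = I f).

(** The dual group tilde(Z_S) = { z in C | z^s = 1 for some s | S }
    = { z | z^(s_m) = 1 for some m }. *)
Definition in_dual (s : scale) (z : C) : Prop :=
  exists m : nat, Cpow z (sc s m) = RtoC 1.

Definition level (s : scale) (z : C) : nat :=
  epsilon (inhabits 0%nat) (fun m => Cpow z (sc s m) = RtoC 1).

(** The character chi_z (chi_z(1) = z): chi_z(x) = z^(x_m) for any m with
    z^(s_m) = 1. *)
Definition chi (s : scale) (z : C) (x : ZS s) : C :=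
  Cpow z (zs x (level s z)).

Definition fourier (s : scale) (I : (ZS s -> C) -> C) (f : ZS s -> C) (z : C) : C :=
  I (fun x => Cmult (f x) (chi s (Cconj z) x)).

Definition is_order (z : C) (n : nat) : Prop :=
  (0 < n)%nat /\ Cpow z n = RtoC 1 /\
  forall k : nat, (0 < k)%nat -> (k < n)%nat -> Cpow z k <> RtoC 1.

(** Non-archimedean length function on tilde(Z_S) (only its values on
    tilde(Z_S) matter). *)
Definition is_na_length (s : scale) (lam : C -> R) : Prop :=
  (forall z, in_dual s z -> 1 <= lam z) /\
  (forall z, in_dual s z -> (lam z = 1 <-> z = RtoC 1)) /\
  (forall z1 z2, in_dual s z1 -> in_dual s z2 ->
      lam (Cmult z1 z2) <= Rmax (lam z1) (lam z2)) /\
  (forall r : R, 1 <= r -> exists l : list C,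
      forall z, in_dual s z -> lam z <= r -> In z l).

Definition grows_fast (s : scale) (lam : C -> R) : Prop :=
  exists alpha c : R, 0 < alpha /\ 0 < c /\
    forall (z : C) (n : nat), in_dual s z -> is_order z n ->
      c * Rpower (INR n) alpha <= lam z.

(** Sum over tilde(Z_S) of a nonnegative function is finite: the sums over
    finite subsets are bounded. *)
Definition dual_summable (s : scale) (a : C -> R) : Prop :=
  exists B : R, forall l : list C, NoDup l -> (forall z, In z l -> in_dual s z) ->
    fold_right Rplus 0 (map a l) <= B.

Definition C_RD (s : scale) (I : (ZS s -> C) -> C) (lam : C -> R) (f : ZS s -> C) : Prop :=
  Zcont s f /\
  forall N : nat, dual_summable s (fun z => Cmod (fourier s I f z) * (lam z ^ N)).

(* A function g with g o phi - g = f must have Fourier coefficients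
   ghat_z = fhat_z / (z - 1) for z <> 1, because chi_z (x + 1) = z chi_z (x); the
   coefficient at z = 1 is free and the equation forces fhat_1 = int f = 0.
   A character z <> 1 of order n satisfies n |z - 1| >= 1, and fast growth of the
   length bounds n by a power of lam z, so |ghat_z| <= A |fhat_z| lam(z)^K and the
   rapid decay of fhat passes to ghat.  The partial sums of sum_z ghat_z chi_z over the
   characters of level m then converge uniformly to a continuous g with Fourier
   coefficients ghat; applying g o phi - g to them gives the Fourier partial sums of f,
   which converge to f by Fourier inversion (integration against the Dirichlet kernel of
   the level-m cylinders).  Conversely, int (g o phi - g) = 0 by translation invariance. *)

From Stdlib Require Import Reals.
From Coquelicot Require Import Coquelicot.
From Stdlib Require Import Lra Lia List Permutation ClassicalEpsilon FunctionalExtensionality.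

Definition csum {A} (l : list A) (F : A -> C) : C := fold_right Cplus 0%C (map F l).
Definition rsum {A} (l : list A) (F : A -> R) : R := fold_right Rplus 0 (map F l).

Lemma csum_cons {A} (a : A) l F : csum (a :: l) F = (F a + csum l F)%C.
Proof. reflexivity. Qed.

Lemma rsum_cons {A} (a : A) l F : rsum (a :: l) F = F a + rsum l F.
Proof. reflexivity. Qed.

Lemma csum_app {A} (l1 l2 : list A) F : csum (l1 ++ l2) F = (csum l1 F + csum l2 F)%C.
Proof.
  induction l1; [unfold csum; simpl; ring | rewrite <- app_comm_cons, !csum_cons, IHl1; ring].
Qed.

Lemma rsum_app {A} (l1 l2 : list A) F : rsum (l1 ++ l2) F = rsum l1 F + rsum l2 F.
Proof.
  induction l1; [unfold rsum; simpl; ring | rewrite <- app_comm_cons, !rsum_cons, IHl1; ring].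
Qed.

Lemma csum_ext {A} (l : list A) F G : (forall x, In x l -> F x = G x) -> csum l F = csum l G.
Proof.
  induction l as [|a l IH]; intros H; [reflexivity|].
  rewrite !csum_cons, H, IH; simpl; auto.
  intros; apply H; simpl; auto.
Qed.

Lemma rsum_le {A} (l : list A) F G : (forall x, In x l -> F x <= G x) -> rsum l F <= rsum l G.
Proof.
  induction l as [|a l IH]; intros H; [unfold rsum; simpl; lra|].
  rewrite !rsum_cons. apply Rplus_le_compat; [apply H; simpl; auto|].
  apply IH; intros; apply H; simpl; auto.
Qed.

Lemma rsum_scal {A} (l : list A) F a : rsum l (fun x => a * F x) = a * rsum l F.
Proof. induction l; [unfold rsum; simpl; ring | rewrite !rsum_cons, IHl; ring]. Qed.

Lemma rsum_const {A} (l : list A) a : rsum l (fun _ => a) = INR (length l) * a.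
Proof.
  induction l; [unfold rsum; simpl; ring|].
  rewrite rsum_cons, IHl; simpl length; rewrite S_INR; ring.
Qed.

Lemma csum_plus {A} (l : list A) F G : csum l (fun x => F x + G x)%C = (csum l F + csum l G)%C.
Proof. induction l; [unfold csum; simpl; ring | rewrite !csum_cons, IHl; ring]. Qed.

Lemma csum_minus {A} (l : list A) F G : csum l (fun x => F x - G x)%C = (csum l F - csum l G)%C.
Proof. induction l; [unfold csum; simpl; ring | rewrite !csum_cons, IHl; ring]. Qed.

Lemma csum_scal {A} (l : list A) F a : csum l (fun x => a * F x)%C = (a * csum l F)%C.
Proof. induction l; [unfold csum; simpl; ring | rewrite !csum_cons, IHl; ring]. Qed.

Lemma csum_const {A} (l : list A) a : csum l (fun _ => a) = (INR (length l) * a)%C.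
Proof.
  induction l; [unfold csum; simpl; ring|].
  rewrite csum_cons, IHl; simpl length; rewrite S_INR, RtoC_plus; ring.
Qed.

Lemma csum_zero {A} (l : list A) (F : A -> C) : (forall x, In x l -> F x = 0%C) -> csum l F = 0%C.
Proof.
  intros H. rewrite (csum_ext l F (fun _ => 0%C)) by (intros; now apply H).
  rewrite csum_const. ring.
Qed.

Lemma csum_perm {A} (l l' : list A) F : Permutation l l' -> csum l F = csum l' F.
Proof.
  induction 1; try congruence.
  - rewrite !csum_cons; congruence.
  - rewrite !csum_cons; ring.
Qed.

Lemma csum_swap {A B} (l1 : list A) (l2 : list B) F :
  csum l1 (fun a => csum l2 (fun b => F a b)) = csum l2 (fun b => csum l1 (fun a => F a b)).
Proof.
  induction l1 as [|a l1 IH].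
  - symmetry; apply (csum_zero l2); reflexivity.
  - rewrite csum_cons, IH, <- csum_plus. reflexivity.
Qed.

Lemma csum_map {A B} (h : B -> A) l F : csum (map h l) F = csum l (fun b => F (h b)).
Proof. unfold csum. now rewrite map_map. Qed.

Lemma Cmod_csum_le {A} (l : list A) F : Cmod (csum l F) <= rsum l (fun x => Cmod (F x)).
Proof.
  induction l; [unfold csum, rsum; simpl; rewrite Cmod_0; lra|].
  rewrite csum_cons, rsum_cons. eapply Rle_trans; [apply Cmod_triangle | lra].
Qed.

Lemma csum_single {A} (l : list A) (F : A -> C) w : NoDup l -> In w l ->
  (forall z, In z l -> z <> w -> F z = 0%C) -> csum l F = F w.
Proof.
  induction l as [|a l IH]; intros Hn Hw H; [destruct Hw|].
  inversion Hn as [|? ? Ha Hl]; subst. rewrite csum_cons.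
  destruct Hw as [<- | Hw].
  - rewrite csum_zero; [ring|]. intros x Hx. apply H; [simpl; auto | intros ->; auto].
  - rewrite IH by (auto; intros; apply H; simpl; auto).
    rewrite H; [ring | simpl; auto | intros ->; auto].
Qed.

(** * Roots of unity *)

Lemma Cminus_1_neq0 (u : C) : u <> 1%C -> (u - 1)%C <> 0%C.
Proof. intros H E. apply H. replace u with (u - 1 + 1)%C by ring. rewrite E. ring. Qed.

Lemma Cmult_reg_l (a b c : C) : a <> 0%C -> (a * b)%C = (a * c)%C -> b = c.
Proof.
  intros Ha E. replace b with (/ a * (a * b))%C by (field; auto). rewrite E. field; auto.
Qed.

Lemma Cconj_1 : Cconj 1%C = 1%C.
Proof. apply injective_projections; simpl; ring. Qed.

Lemma Cconj_pow_eq1 (u : C) n : (u ^ n)%C = 1%C -> (Cconj u ^ n)%C = 1%C.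
Proof. intros H. now rewrite <- Cpow_conj, H, Cconj_1. Qed.

Lemma Cmod_pow_unit (u : C) k : Cmod u = 1 -> Cmod (u ^ k)%C = 1.
Proof. intros H. rewrite Cmod_pow, H. apply pow1. Qed.

Lemma Cmult_conj_unit (u : C) : Cmod u = 1 -> (u * Cconj u)%C = 1%C.
Proof. intros H. rewrite <- Cmod2_conj, H. f_equal. ring. Qed.

Lemma Cmult_conj_eq1 (z w : C) : Cmod w = 1 -> (z * Cconj w)%C = 1%C -> z = w.
Proof.
  intros Hw E. rewrite <- (Cmult_1_l w). rewrite <- E at 1.
  rewrite <- Cmult_assoc, (Cmult_comm (Cconj w)), Cmult_conj_unit by auto. ring.
Qed.

Lemma Cmod_pow_eq1 (u : C) n : (0 < n)%nat -> (u ^ n)%C = 1%C -> Cmod u = 1.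
Proof.
  intros Hn H. assert (E : Cmod u ^ n = 1) by (rewrite <- Cmod_pow, H; apply Cmod_1).
  pose proof (Cmod_ge_0 u).
  destruct (Rtotal_order (Cmod u) 1) as [L|[L|L]]; auto; exfalso.
  - assert (Cmod u ^ n < 1) by (apply pow_lt_1_compat; [lra|lia]). lra.
  - assert (1 < Cmod u ^ n) by (apply Rlt_pow_R1; [lra|lia]). lra.
Qed.

Lemma csum_pow_eq1 (u : C) n : (u ^ n)%C = 1%C -> u <> 1%C -> csum (seq 0 n) (Cpow u) = 0%C.
Proof.
  intros Hn Hu.
  assert (Geom : forall k, ((u - 1) * csum (seq 0 k) (Cpow u))%C = (u ^ k - 1)%C).
  { induction k; [unfold csum; simpl; ring|].
    rewrite seq_S, csum_app, Cmult_plus_distr_l, IHk. unfold csum; simpl; ring. }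
  apply (Cmult_reg_l (u - 1)%C); [now apply Cminus_1_neq0|].
  rewrite Geom, Hn. ring.
Qed.

Lemma Cpow_cos_sin (a : R) k : ((cos a, sin a) ^ k)%C = (cos (INR k * a), sin (INR k * a)).
Proof.
  induction k.
  - simpl. rewrite Rmult_0_l, cos_0, sin_0. reflexivity.
  - rewrite Cpow_S, IHk, S_INR. replace ((INR k + 1) * a) with (a + INR k * a) by ring.
    rewrite cos_plus, sin_plus. unfold Cmult; simpl. f_equal; ring.
Qed.

Definition unit_root (n : nat) : C := (cos (2 * PI / INR n), sin (2 * PI / INR n)).

Lemma Cmod_unit_root n : Cmod (unit_root n) = 1.
Proof.
  unfold unit_root, Cmod; cbn [fst snd].
  rewrite <- sqrt_1. f_equal. rewrite <- (sin2_cos2 (2 * PI / INR n)). unfold Rsqr. ring.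
Qed.

Lemma unit_root_pow_n n : (0 < n)%nat -> (unit_root n ^ n)%C = 1%C.
Proof.
  intros H. unfold unit_root. rewrite Cpow_cos_sin.
  replace (INR n * (2 * PI / INR n)) with (2 * PI) by (field; apply not_0_INR; lia).
  rewrite cos_2PI, sin_2PI. reflexivity.
Qed.

Lemma unit_root_pow_neq1 n k : (0 < k < n)%nat -> (unit_root n ^ k)%C <> 1%C.
Proof.
  intros Hk. unfold unit_root. rewrite Cpow_cos_sin. intros E. injection E as Ecos Esin.
  set (x := INR k * (2 * PI / INR n)) in *.
  assert (Hn : 0 < INR n) by (apply lt_0_INR; lia).
  assert (Hkn : 0 < INR k / INR n < 1).
  { split; [apply Rdiv_lt_0_compat; auto; apply lt_0_INR; lia|].
    apply (Rmult_lt_reg_r (INR n)); auto. unfold Rdiv.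
    rewrite Rmult_assoc, Rinv_l, Rmult_1_r, Rmult_1_l by lra. apply lt_INR; lia. }
  assert (Hx : x = 2 * PI * (INR k / INR n)) by (unfold x; field; lra).
  pose proof PI_RGT_0.
  assert (0 < x < 2 * PI) by (rewrite Hx; split; nra).
  destruct (sin_eq_O_2PI_0 x) as [E|[E|E]]; try lra.
  rewrite E, cos_PI in Ecos. lra.
Qed.

Lemma unit_root_pow_inj n a b : (a < n)%nat -> (b < n)%nat ->
  (unit_root n ^ a)%C = (unit_root n ^ b)%C -> a = b.
Proof.
  assert (Lt : forall a b, (a < b < n)%nat -> (unit_root n ^ a)%C <> (unit_root n ^ b)%C).
  { intros a' b' H E. apply (unit_root_pow_neq1 n (b' - a')); [lia|].
    assert (Ha : (unit_root n ^ a')%C <> 0%C).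
    { intros E0. pose proof (Cmod_pow_unit _ a' (Cmod_unit_root n)) as H1.
      rewrite E0, Cmod_0 in H1. lra. }
    apply (Cmult_reg_l _ _ _ Ha). rewrite <- Cpow_add_r, E, Cmult_1_r.
    f_equal. lia. }
  intros Ha Hb E. destruct (Nat.lt_total a b) as [L|[L|L]]; auto; exfalso.
  - apply (Lt a b); auto.
  - apply (Lt b a); auto.
Qed.

Definition roots_of_unity (n : nat) : list C := map (Cpow (unit_root n)) (seq 0 n).

Lemma roots_of_unity_NoDup n : NoDup (roots_of_unity n).
Proof.
  apply NoDup_map_NoDup_ForallPairs; [|apply seq_NoDup].
  intros a b Ha Hb. apply in_seq in Ha, Hb. apply unit_root_pow_inj; lia.
Qed.

Lemma roots_of_unity_pow n (z : C) : (0 < n)%nat -> In z (roots_of_unity n) -> (z ^ n)%C = 1%C.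
Proof.
  intros Hn H. apply in_map_iff in H as [j [<- _]].
  rewrite <- Cpow_mult_r, Nat.mul_comm, Cpow_mult_r, unit_root_pow_n by auto. apply Cpow_1_l.
Qed.

(* If z^n = 1 but z is none of the w_j = unit_root n ^ j, the double sum
   sum_j sum_k (z conj w_j)^k vanishes termwise in j, while summing first over j
   only the term k = 0 survives and gives n. *)
Lemma roots_of_unity_complete n (z : C) : (0 < n)%nat -> (z ^ n)%C = 1%C -> In z (roots_of_unity n).
Proof.
  intros Hn Hz. apply NNPP. intros Hno.
  set (w := unit_root n).
  assert (Hw : forall j, Cmod (w ^ j)%C = 1) by (intros; apply Cmod_pow_unit, Cmod_unit_root).
  assert (Hwn : forall j, ((Cconj (w ^ j)) ^ n)%C = 1%C).
  { intros j. apply Cconj_pow_eq1. unfold w.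
    rewrite <- Cpow_mult_r, Nat.mul_comm, Cpow_mult_r, unit_root_pow_n by auto. apply Cpow_1_l. }
  set (T := csum (seq 0 n) (fun j => csum (seq 0 n) (Cpow (z * Cconj (w ^ j))))).
  assert (T0 : T = 0%C).
  { apply csum_zero. intros j Hj. apply csum_pow_eq1.
    - now rewrite Cpow_mult_l, Hz, Hwn, Cmult_1_l.
    - intros E. apply Hno, in_map_iff. exists j. split; [|exact Hj].
      symmetry. now apply Cmult_conj_eq1. }
  assert (Tn : T = RtoC (INR n)).
  { unfold T. rewrite csum_swap.
    replace (seq 0 n) with (0%nat :: seq 1 (n - 1)) at 1
      by (destruct n; [lia | simpl; now rewrite Nat.sub_0_r]).
    rewrite csum_cons, (csum_zero (seq 1 (n - 1))).
    - rewrite (csum_ext _ _ (fun _ => 1%C)), csum_const, length_seq by reflexivity. ring.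
    - intros k Hk. apply in_seq in Hk.
      rewrite (csum_ext _ _ (fun j => z ^ k * Cconj (w ^ k) ^ j)%C), csum_scal.
      + rewrite csum_pow_eq1; [ring | apply Hwn|].
        intros E. apply (unit_root_pow_neq1 n k); [lia|].
        fold w. rewrite <- (Cconj_conj (w ^ k)%C), E. apply Cconj_1.
      + intros j _. rewrite Cpow_mult_l. f_equal.
        rewrite !Cpow_conj, <- !Cpow_mult_r, Nat.mul_comm. reflexivity. }
  rewrite T0 in Tn. injection Tn as Tn. apply (not_0_INR n); [lia | auto].
Qed.

Lemma In_roots_of_unity n (z : C) : (0 < n)%nat -> In z (roots_of_unity n) <-> (z ^ n)%C = 1%C.
Proof. split; [now apply roots_of_unity_pow | now apply roots_of_unity_complete]. Qed.

Lemma is_order_exists (z : C) k : (0 < k)%nat -> (z ^ k)%C = 1%C -> exists n, is_order z n.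
Proof.
  revert z. induction k as [k IH] using (well_founded_induction Nat.lt_wf_0). intros z Hk E.
  destruct (classic (exists k', (0 < k' < k)%nat /\ (z ^ k')%C = 1%C)) as [[k' [Hk' E']]|N].
  - apply (IH k'); tauto.
  - exists k. repeat split; auto. intros k' H1 H2 E'. apply N. eauto.
Qed.

Lemma Cmod_1_sub_pow_le (z : C) k : Cmod z = 1 -> Cmod (1 - z ^ k)%C <= INR k * Cmod (z - 1)%C.
Proof.
  intros Hz. induction k.
  - simpl. replace (1 - 1)%C with (RtoC 0) by ring. rewrite Cmod_0. lra.
  - replace (1 - z ^ S k)%C with ((1 - z ^ k) + z ^ k * - (z - 1))%C by (rewrite Cpow_S; ring).
    eapply Rle_trans; [apply Cmod_triangle|].
    rewrite Cmod_mult, Cmod_opp, Cmod_pow_unit, S_INR by auto. lra.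
Qed.

(* Since sum_{j<n} z^j = 0, n = sum_{j<n} (1 - z^j) and |1 - z^j| <= n |z - 1|. *)
Lemma is_order_dist1_ge n (z : C) : is_order z n -> z <> 1%C -> 1 <= INR n * Cmod (z - 1)%C.
Proof.
  intros [Hn [Hz _]] Hne.
  assert (Hmz : Cmod z = 1) by now apply (Cmod_pow_eq1 z n).
  assert (E : RtoC (INR n) = csum (seq 0 n) (fun j => 1 - z ^ j)%C).
  { rewrite csum_minus, (csum_pow_eq1 z n Hz Hne), csum_const, length_seq. ring. }
  assert (B : INR n <= INR n * (INR n * Cmod (z - 1)%C)).
  { replace (INR n) with (Cmod (INR n)) at 1 by (rewrite Cmod_R; apply Rabs_pos_eq, pos_INR).
    rewrite E. eapply Rle_trans; [apply Cmod_csum_le|].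
    apply Rle_trans with (rsum (seq 0 n) (fun _ => INR n * Cmod (z - 1)%C)).
    - apply rsum_le. intros j Hj. apply in_seq in Hj.
      eapply Rle_trans; [now apply Cmod_1_sub_pow_le|].
      apply Rmult_le_compat_r; [apply Cmod_ge_0 | apply le_INR; lia].
    - rewrite rsum_const, length_seq. lra. }
  assert (0 < INR n) by (apply lt_0_INR; auto).
  apply (Rmult_le_reg_l (INR n)); auto. lra.
Qed.

Section Odometer.
Variable s : scale.

Lemma sc_divide_le a b : (a <= b)%nat -> Nat.divide (sc s a) (sc s b).
Proof.
  induction 1; [apply Nat.divide_refl|]. eapply Nat.divide_trans; eauto. apply sc_dvd.
Qed.

Lemma zs_mod_le (x : ZS s) a b : (a <= b)%nat -> zs x a = Nat.modulo (zs x b) (sc s a).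
Proof.
  induction 1; [symmetry; apply Nat.mod_small, zs_lt|].
  rewrite IHle, (zs_coh s x m), mod_mod_dvd; auto. now apply sc_divide_le.
Qed.

Lemma zs_eq_le (x y : ZS s) a b : (a <= b)%nat -> zs y b = zs x b -> zs y a = zs x a.
Proof. intros H E. rewrite (zs_mod_le x a b), (zs_mod_le y a b), E; auto. Qed.

Lemma Cpow_sc_le (u : C) a b : (a <= b)%nat -> (u ^ sc s a)%C = 1%C -> (u ^ sc s b)%C = 1%C.
Proof.
  intros H E. destruct (sc_divide_le a b H) as [k ->].
  rewrite Nat.mul_comm, Cpow_mult_r, E. apply Cpow_1_l.
Qed.

Lemma Cpow_mod (u : C) n k : (0 < n)%nat -> (u ^ n)%C = 1%C -> (u ^ k)%C = (u ^ Nat.modulo k n)%C.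
Proof.
  intros Hn E. rewrite (Nat.div_mod_eq k n) at 1.
  rewrite Cpow_add_r, Cpow_mult_r, E, Cpow_1_l. ring.
Qed.

Lemma Cpow_zs_level (u : C) (x : ZS s) a b :
  (u ^ sc s a)%C = 1%C -> (u ^ sc s b)%C = 1%C -> (u ^ zs x a)%C = (u ^ zs x b)%C.
Proof.
  intros Ha Hb. destruct (Nat.le_ge_cases a b) as [L|L].
  - rewrite (zs_mod_le x a b L). symmetry. apply Cpow_mod; auto. apply sc_pos.
  - rewrite (zs_mod_le x b a L). apply Cpow_mod; auto. apply sc_pos.
Qed.

Lemma chi_at (u : C) m (x : ZS s) : (u ^ sc s m)%C = 1%C -> chi s u x = (u ^ zs x m)%C.
Proof.
  intros H. unfold chi, level. apply Cpow_zs_level; auto.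
  apply (epsilon_spec (inhabits 0%nat) (fun m => (u ^ sc s m)%C = 1%C)). eauto.
Qed.

Lemma zs_phi (x : ZS s) m : zs (phi s x) m = Nat.modulo (zs x m + 1) (sc s m).
Proof. apply Nat.Div0.add_mod_idemp_r. Qed.

Lemma Cpow_zs_phi (u : C) m (x : ZS s) :
  (u ^ sc s m)%C = 1%C -> (u ^ zs (phi s x) m)%C = (u * u ^ zs x m)%C.
Proof.
  intros H. rewrite zs_phi, <- Cpow_mod by (auto; apply sc_pos).
  rewrite Nat.add_comm. apply Cpow_S.
Qed.

End Odometer.

Section Continuity.
Variable s : scale.

Lemma Zcont_ext (f g : ZS s -> C) : (forall x, f x = g x) -> Zcont s f -> Zcont s g.
Proof. intros H. replace g with f; auto. now apply functional_extensionality. Qed.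

Lemma Zcont_coord m (F : nat -> C) : Zcont s (fun y => F (zs y m)).
Proof.
  intros x eps He. exists m. intros y ->.
  replace (F (zs x m) - F (zs x m))%C with (RtoC 0) by ring. now rewrite Cmod_0.
Qed.

Lemma Zcont_const c : Zcont s (fun _ => c).
Proof. apply (Zcont_coord 0 (fun _ => c)). Qed.

Lemma Zcont_plus (f g : ZS s -> C) : Zcont s f -> Zcont s g -> Zcont s (fun x => f x + g x)%C.
Proof.
  intros Hf Hg x eps He.
  destruct (Hf x (eps / 2)) as [m1 H1]; [lra|]. destruct (Hg x (eps / 2)) as [m2 H2]; [lra|].
  exists (Nat.max m1 m2). intros y E.
  specialize (H1 y (zs_eq_le s x y _ _ (Nat.le_max_l _ _) E)).
  specialize (H2 y (zs_eq_le s x y _ _ (Nat.le_max_r _ _) E)).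
  replace (f y + g y - (f x + g x))%C with ((f y - f x) + (g y - g x))%C by ring.
  eapply Rle_lt_trans; [apply Cmod_triangle | lra].
Qed.

Lemma Zcont_mult (f g : ZS s -> C) : Zcont s f -> Zcont s g -> Zcont s (fun x => f x * g x)%C.
Proof.
  intros Hf Hg x eps He.
  set (a := Cmod (f x)). set (b := Cmod (g x)).
  assert (Ha : 0 <= a) by apply Cmod_ge_0. assert (Hb : 0 <= b) by apply Cmod_ge_0.
  destruct (Hf x (eps / 2 / (b + 1))) as [m1 H1]; [apply Rdiv_lt_0_compat; lra|].
  destruct (Hg x (Rmin 1 (eps / 2 / (a + 1)))) as [m2 H2].
  { apply Rmin_pos; [lra | apply Rdiv_lt_0_compat; lra]. }
  exists (Nat.max m1 m2). intros y E.
  specialize (H1 y (zs_eq_le s x y _ _ (Nat.le_max_l _ _) E)).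
  specialize (H2 y (zs_eq_le s x y _ _ (Nat.le_max_r _ _) E)).
  set (df := Cmod (f y - f x)%C) in *. set (dg := Cmod (g y - g x)%C) in *.
  assert (Hdf : 0 <= df) by apply Cmod_ge_0. assert (Hdg : 0 <= dg) by apply Cmod_ge_0.
  assert (Hgy : Cmod (g y) <= b + 1).
  { replace (g y) with (g x + (g y - g x))%C by ring.
    eapply Rle_trans; [apply Cmod_triangle|].
    pose proof (Rmin_l 1 (eps / 2 / (a + 1))). fold b dg. lra. }
  replace (f y * g y - f x * g x)%C with ((f y - f x) * g y + f x * (g y - g x))%C by ring.
  eapply Rle_lt_trans; [apply Cmod_triangle|]. rewrite !Cmod_mult. fold df dg a.
  assert (df * Cmod (g y) < eps / 2).
  { apply Rle_lt_trans with (df * (b + 1)); [apply Rmult_le_compat_l; lra|].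
    apply (Rmult_lt_reg_r (/ (b + 1))); [apply Rinv_0_lt_compat; lra|].
    rewrite Rmult_assoc, Rinv_r, Rmult_1_r by lra. exact H1. }
  assert (a * dg <= eps / 2).
  { apply Rle_trans with ((a + 1) * (eps / 2 / (a + 1))).
    - apply Rmult_le_compat; try lra. pose proof (Rmin_r 1 (eps / 2 / (a + 1))). lra.
    - right. field. lra. }
  lra.
Qed.

Lemma Zcont_scal a (f : ZS s -> C) : Zcont s f -> Zcont s (fun x => a * f x)%C.
Proof. apply Zcont_mult, Zcont_const. Qed.

Lemma Zcont_minus (f g : ZS s -> C) : Zcont s f -> Zcont s g -> Zcont s (fun x => f x - g x)%C.
Proof.
  intros Hf Hg. apply (Zcont_ext (fun x => f x + (-1) * g x)%C); [intros; ring|].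
  now apply Zcont_plus, Zcont_scal.
Qed.

Lemma Zcont_csum {A} (l : list A) (F : A -> ZS s -> C) :
  (forall z, In z l -> Zcont s (F z)) -> Zcont s (fun y => csum l (fun z => F z y)).
Proof.
  induction l as [|a l IH]; intros H; [apply (Zcont_const (RtoC 0))|].
  apply Zcont_plus; [apply H; simpl; auto | apply IH; intros; apply H; simpl; auto].
Qed.

Lemma Zcont_lipschitz (h : C -> C) (f : ZS s -> C) :
  (forall a b, Cmod (h a - h b)%C <= Cmod (a - b)%C) -> Zcont s f -> Zcont s (fun x => h (f x)).
Proof.
  intros Hh Hf x eps He. destruct (Hf x eps He) as [m Hm].
  exists m. intros y E. eapply Rle_lt_trans; [apply Hh | auto].
Qed.

Lemma Zcont_phi (f : ZS s -> C) : Zcont s f -> Zcont s (fun x => f (phi s x)).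
Proof.
  intros Hf x eps He. destruct (Hf (phi s x) eps He) as [m H].
  exists m. intros y E. apply H. now rewrite !zs_phi, E.
Qed.

End Continuity.

Definition Cnonneg (z : C) : Prop := Im z = 0 /\ 0 <= Re z.

Lemma im_le_Cmod (z : C) : Rabs (Im z) <= Cmod z.
Proof. eapply Rle_trans; [apply Rmax_r | apply Rmax_Cmod]. Qed.

Lemma Cmod_real (z : C) : Im z = 0 -> Cmod z = Rabs (Re z).
Proof. intros H. rewrite <- Cmod_R. f_equal. apply injective_projections; simpl; auto. Qed.

Section HaarIntegral.
Variable s : scale.
Variable I : (ZS s -> C) -> C.
Hypothesis HI : is_haar_integral s I.

Lemma haar_ext (f g : ZS s -> C) : (forall x, f x = g x) -> I f = I g.
Proof. intros H. f_equal. now apply functional_extensionality. Qed.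

Lemma haar_lin a (f g : ZS s -> C) : Zcont s f -> Zcont s g ->
  I (fun x => a * f x + g x)%C = (a * I f + I g)%C.
Proof. apply (proj1 HI). Qed.

Lemma haar_one : I (fun _ => 1%C) = 1%C.
Proof. apply (proj1 (proj2 (proj2 HI))). Qed.

Lemma haar_nonneg f : Zcont s f -> (forall x, Cnonneg (f x)) -> Cnonneg (I f).
Proof. apply (proj1 (proj2 HI)). Qed.

Lemma haar_phi f : Zcont s f -> I (fun x => f (phi s x)) = I f.
Proof. apply (proj2 (proj2 (proj2 HI)) (zone s)). Qed.

Lemma haar_zero : I (fun _ => RtoC 0) = RtoC 0.
Proof.
  pose proof (haar_lin 1 _ _ (Zcont_const s 0) (Zcont_const s 0)) as H.
  rewrite (haar_ext _ (fun _ => RtoC 0)) in H by (intros; ring).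
  set (Z := I (fun _ => RtoC 0)) in *.
  replace Z with ((1 * Z + Z) - Z)%C by ring. rewrite <- H. ring.
Qed.

Lemma haar_scal a f : Zcont s f -> I (fun x => a * f x)%C = (a * I f)%C.
Proof.
  intros Hf. rewrite (haar_ext _ (fun x => a * f x + 0)%C), haar_lin, haar_zero
    by (auto using Zcont_const; intros; ring).
  ring.
Qed.

Lemma haar_plus f g : Zcont s f -> Zcont s g -> I (fun x => f x + g x)%C = (I f + I g)%C.
Proof.
  intros Hf Hg. rewrite (haar_ext _ (fun x => 1 * f x + g x)%C), haar_lin by (auto; intros; ring).
  ring.
Qed.

Lemma haar_minus f g : Zcont s f -> Zcont s g -> I (fun x => f x - g x)%C = (I f - I g)%C.
Proof.
  intros Hf Hg.
  rewrite (haar_ext _ (fun x => (-1) * g x + f x)%C), haar_lin by (auto; intros; ring).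
  ring.
Qed.

Lemma haar_const c : I (fun _ => c) = c.
Proof.
  rewrite (haar_ext _ (fun _ => c * 1)%C), haar_scal, haar_one
    by (auto using Zcont_const; intros; ring).
  ring.
Qed.

Lemma haar_csum {A} (l : list A) (F : A -> ZS s -> C) : (forall z, In z l -> Zcont s (F z)) ->
  I (fun y => csum l (fun z => F z y)) = csum l (fun z => I (F z)).
Proof.
  induction l as [|a l IH]; intros H; [apply haar_zero|].
  rewrite csum_cons, <- IH by (intros; apply H; simpl; auto).
  apply haar_plus; [apply H; simpl; auto | apply Zcont_csum; intros; apply H; simpl; auto].
Qed.

(* Apply positivity to M u + r and M u - r. *)
Lemma haar_real_bound r u M : Zcont s r -> Zcont s u ->
  (forall y, Im (r y) = 0) -> (forall y, Cnonneg (u y)) ->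
  (forall y, Rabs (Re (r y)) <= M * Re (u y)) ->
  Im (I r) = 0 /\ Rabs (Re (I r)) <= M * Re (I u).
Proof.
  intros Hr Hu Hri Hun Hb.
  assert (Side : forall e : R, e = 1 \/ e = -1 -> Cnonneg (M * I u + e * I r)%C).
  { intros e He. rewrite <- (haar_scal e), <- haar_lin by auto using Zcont_scal.
    apply haar_nonneg; [auto using Zcont_plus, Zcont_scal|].
    intros y. specialize (Hri y). specialize (Hun y). specialize (Hb y).
    destruct Hun as [Hu1 Hu2]. unfold Cnonneg, Re, Im in *. simpl.
    rewrite Hri, Hu1. split; [ring|].
    pose proof (Rle_abs (fst (r y))). pose proof (Rabs_maj2 (fst (r y))).
    destruct He as [-> | ->]; lra. }
  destruct (haar_nonneg u Hu Hun) as [Hu1 Hu2].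
  destruct (Side 1 (or_introl eq_refl)) as [P1 Q1].
  destruct (Side (-1) (or_intror eq_refl)) as [P2 Q2].
  unfold Re, Im in *; simpl in *. split; [nra | apply Rabs_le; nra].
Qed.

Lemma haar_Cmod_le k u M : Zcont s k -> Zcont s u ->
  (forall y, Cnonneg (u y)) -> (forall y, Cmod (k y) <= M * Re (u y)) ->
  Cmod (I k) <= 2 * M * Re (I u).
Proof.
  intros Hk Hu Hun Hb.
  set (kr := fun y => RtoC (Re (k y))). set (ki := fun y => RtoC (Im (k y))).
  assert (Hkr : Zcont s kr).
  { apply (Zcont_lipschitz s (fun z => RtoC (Re z))); auto. intros a b.
    rewrite <- RtoC_minus, Cmod_R. replace (Re a - Re b) with (Re (a - b)%C)
      by (unfold Re; simpl; ring). apply re_le_Cmod. }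
  assert (Hki : Zcont s ki).
  { apply (Zcont_lipschitz s (fun z => RtoC (Im z))); auto. intros a b.
    rewrite <- RtoC_minus, Cmod_R. replace (Im a - Im b) with (Im (a - b)%C)
      by (unfold Im; simpl; ring). apply im_le_Cmod. }
  destruct (haar_real_bound kr u M) as [R1 R2]; auto.
  { intros y. simpl. eapply Rle_trans; [apply re_le_Cmod | apply Hb]. }
  destruct (haar_real_bound ki u M) as [R3 R4]; auto.
  { intros y. simpl. eapply Rle_trans; [apply im_le_Cmod | apply Hb]. }
  rewrite (haar_ext k (fun y => Ci * ki y + kr y)%C), haar_lin; auto.
  2:{ intros y. unfold ki, kr. apply injective_projections; unfold Re, Im; simpl; ring. }
  eapply Rle_trans; [apply Cmod_triangle|].
  rewrite Cmod_mult, Cmod_Ci, !Cmod_real by auto. lra.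
Qed.

Lemma haar_eigen_phi h u : Zcont s h -> (forall x, h (phi s x) = u * h x)%C -> u <> 1%C ->
  I h = RtoC 0.
Proof.
  intros Hh Eh Hu.
  assert (E : I h = (u * I h)%C).
  { rewrite <- haar_scal by auto.
    rewrite <- (haar_ext (fun x => h (phi s x)) (fun x => u * h x)%C) by exact Eh.
    symmetry. now apply haar_phi. }
  apply (Cmult_reg_l (u - 1)%C); [now apply Cminus_1_neq0|].
  replace ((u - 1) * I h)%C with (u * I h - I h)%C by ring. rewrite <- E. ring.
Qed.

Lemma haar_pow_zs m u : (u ^ sc s m)%C = 1%C -> u <> 1%C -> I (fun y => u ^ zs y m)%C = RtoC 0.
Proof.
  intros Hm Hu. apply (haar_eigen_phi _ u); auto.
  - apply (Zcont_coord s m (Cpow u)).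
  - intros x. now apply Cpow_zs_phi.
Qed.

(* Orthogonality of the characters of level m. *)
Lemma haar_csum_pow_zs m (l : list C) (c : C -> C) w : NoDup l -> In w l ->
  (forall z, In z l -> (z ^ sc s m)%C = 1%C) ->
  I (fun y => csum l (fun z => c z * (z * Cconj w) ^ zs y m))%C = c w.
Proof.
  intros Hl Hw Hroots.
  assert (Hmw : Cmod w = 1) by (apply (Cmod_pow_eq1 w (sc s m)); auto using sc_pos).
  rewrite haar_csum by (intros; apply Zcont_scal, (Zcont_coord s m (Cpow _))).
  rewrite (csum_single _ _ w); auto.
  - rewrite Cmult_conj_unit by auto.
    rewrite (haar_ext _ (fun _ => c w)), haar_const; auto. intros; rewrite Cpow_1_l; ring.
  - intros z Hz Hzw. rewrite haar_scal by apply (Zcont_coord s m (Cpow _)).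
    rewrite haar_pow_zs with (m := m); [ring | |].
    + rewrite Cpow_mult_l, Cconj_pow_eq1, Hroots by auto. ring.
    + intros E. now apply Hzw, Cmult_conj_eq1.
Qed.

End HaarIntegral.

Lemma Cmod_in_dual s z : in_dual s z -> Cmod z = 1.
Proof. intros [m H]. apply (Cmod_pow_eq1 z (sc s m)); auto using sc_pos. Qed.

Section Growth.
Variable s : scale.
Variable lam : C -> R.
Hypothesis Hlam : is_na_length s lam.
Hypothesis Hgrow : grows_fast s lam.

Lemma length_ge1 z : in_dual s z -> 1 <= lam z.
Proof. apply (proj1 Hlam). Qed.

(* From c n^alpha <= lam z: n <= (lam z / c)^(1/alpha) <= (lam z / c)^K for an integer
   K >= 1/alpha; note lam z / c >= 1 because c <= lam 1 = 1. *)
Lemma order_le_length_pow : exists (K : nat) (A : R), 0 < A /\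
  forall z n, in_dual s z -> is_order z n -> INR n <= A * lam z ^ K.
Proof.
  destruct Hgrow as [al [c [Hal [Hc Hg]]]].
  assert (Hc1 : c <= 1).
  { assert (D1 : in_dual s 1) by (exists 0%nat; apply Cpow_1_l).
    assert (O1 : is_order 1 1) by (split; [lia | split; [apply Cpow_1_l | intros; lia]]).
    pose proof (Hg _ _ D1 O1) as H.
    rewrite (proj2 (proj1 (proj2 Hlam) _ D1) eq_refl) in H.
    unfold Rpower in H. simpl INR in H. rewrite ln_1, Rmult_0_r, exp_0 in H. lra. }
  destruct (INR_unbounded (/ al)) as [K HK].
  exists K, (/ c ^ K). split; [apply Rinv_0_lt_compat, pow_lt; auto|].
  intros z n Dz On.
  assert (HnR : 0 < INR n) by (apply lt_0_INR, On).
  pose proof (length_ge1 z Dz) as Hl1.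
  set (q := lam z / c).
  assert (Hq : 1 <= q).
  { unfold q. apply (Rmult_le_reg_r c); auto. unfold Rdiv. rewrite Rmult_assoc, Rinv_l; lra. }
  assert (Hna : Rpower (INR n) al <= q).
  { unfold q. apply (Rmult_le_reg_l c); auto. unfold Rdiv.
    rewrite (Rmult_comm (lam z)), <- Rmult_assoc, Rinv_r, Rmult_1_l by lra. apply Hg; auto. }
  replace (INR n) with (Rpower (Rpower (INR n) al) (/ al))
    by (rewrite Rpower_mult, Rinv_r, Rpower_1; auto; lra).
  apply Rle_trans with (Rpower q (/ al)).
  { apply Rle_Rpower_l; [left; apply Rinv_0_lt_compat; auto | split; [apply exp_pos | auto]]. }
  apply Rle_trans with (Rpower q (INR K)); [apply Rle_Rpower; auto; lra|].
  rewrite Rpower_pow by lra. unfold q, Rdiv. rewrite Rpow_mult_distr, pow_inv. lra.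
Qed.

Lemma inv_dist1_le_length_pow : exists (K : nat) (A : R), 0 < A /\
  forall z, in_dual s z -> z <> 1%C -> / Cmod (z - 1)%C <= A * lam z ^ K.
Proof.
  destruct order_le_length_pow as [K [A [HA Hb]]].
  exists K, A. split; auto. intros z [m Hm] Hne.
  destruct (is_order_exists z (sc s m)) as [n On]; auto using sc_pos.
  pose proof (is_order_dist1_ge n z On Hne) as Hn.
  assert (Hd : 0 < Cmod (z - 1)%C) by (apply Cmod_gt_0, Cminus_1_neq0; auto).
  apply Rle_trans with (INR n); [|apply Hb; auto; exists m; auto].
  apply (Rmult_le_reg_r (Cmod (z - 1)%C)); auto. rewrite Rinv_l; lra.
Qed.

End Growth.

Definition dual_at (s : scale) (m : nat) : list C := roots_of_unity (sc s m).

Section DualLevels.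
Variable s : scale.

Lemma In_dual_at m z : In z (dual_at s m) <-> (z ^ sc s m)%C = 1%C.
Proof. apply In_roots_of_unity, sc_pos. Qed.

Lemma dual_at_NoDup m : NoDup (dual_at s m).
Proof. apply roots_of_unity_NoDup. Qed.

Lemma dual_at_le m p z : (m <= p)%nat -> In z (dual_at s m) -> In z (dual_at s p).
Proof. rewrite !In_dual_at. apply Cpow_sc_le. Qed.

Lemma dual_at_in_dual m z : In z (dual_at s m) -> in_dual s z.
Proof. intros H. exists m. now apply In_dual_at. Qed.

Lemma dual_at_cover l : (forall z, In z l -> in_dual s z) ->
  exists M, forall z, In z l -> In z (dual_at s M).
Proof.
  induction l as [|a l IH]; intros H; [exists 0%nat; intros z []|].
  destruct IH as [M HM]; [intros; apply H; simpl; auto|].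
  destruct (H a) as [m Hm]; [simpl; auto|].
  exists (Nat.max m M). intros z [<-|Hz].
  - apply (dual_at_le m); [lia | now apply In_dual_at].
  - apply (dual_at_le M); auto; lia.
Qed.

(* Approximate the supremum T of the finite sums by the sum over some l0; l0 lives at
   some level M, and any list avoiding level M can be appended to l0 without exceeding T. *)
Lemma dual_summable_tail h : dual_summable s h -> forall eps, 0 < eps ->
  exists M, forall l, NoDup l -> (forall z, In z l -> in_dual s z /\ ~ In z (dual_at s M)) ->
    rsum l h <= eps.
Proof.
  intros [B HB] eps He.
  set (E := fun r => exists l, NoDup l /\ (forall z, In z l -> in_dual s z) /\ r = rsum l h).
  destruct (completeness E) as [T [HT1 HT2]].
  { exists B. intros r [l [H1 [H2 ->]]]. now apply HB. }
  { exists 0, nil. repeat split; [constructor | intros z []]. }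
  assert (Ex : exists l0, NoDup l0 /\ (forall z, In z l0 -> in_dual s z) /\ T - eps < rsum l0 h).
  { apply NNPP. intros N. assert (T <= T - eps); [|lra].
    apply HT2. intros r [l [H1 [H2 ->]]]. apply Rnot_lt_le. intros L. apply N. eauto. }
  destruct Ex as [l0 [N0 [D0 L0]]]. destruct (dual_at_cover l0 D0) as [M HM].
  exists M. intros l Nl Hl.
  assert (rsum (l ++ l0) h <= T); [|rewrite rsum_app in *; lra].
  apply HT1. exists (l ++ l0). repeat split.
  - apply NoDup_app; auto. intros a Ha Ha0. apply (Hl a Ha), HM, Ha0.
  - intros z Hz. apply in_app_iff in Hz as [Hz|Hz]; [apply Hl | apply D0]; auto.
Qed.

End DualLevels.

Definition Ccauchy (u : nat -> C) : Prop :=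
  forall eps, 0 < eps -> exists M, forall m p, (M <= m <= p)%nat -> Cmod (u p - u m)%C <= eps.

(* Meaningful only for Cauchy u: [real (Lim_seq _)] is a junk value otherwise. *)
Definition Clim (u : nat -> C) : C :=
  (real (Lim_seq (fun p => Re (u p))), real (Lim_seq (fun p => Im (u p)))).

Lemma Lim_seq_near (u : nat -> R) eps M :
  (forall e, 0 < e -> exists N, forall m p, (N <= m <= p)%nat -> Rabs (u p - u m) <= e) ->
  (forall m p, (M <= m <= p)%nat -> Rabs (u p - u m) <= eps) ->
  forall m, (M <= m)%nat -> Rabs (real (Lim_seq u) - u m) <= eps.
Proof.
  intros Hc HM m Hm.
  assert (Ex : ex_finite_lim_seq u).
  { apply ex_lim_seq_cauchy_corr. intros [e He]. destruct (Hc (e / 2)) as [N HN]; [simpl; lra|].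
    exists N. intros a b Ha Hb. simpl.
    destruct (Nat.le_ge_cases a b); [rewrite Rabs_minus_sym|];
      (eapply Rle_lt_trans; [apply HN; lia | lra]). }
  destruct Ex as [l Hl]. rewrite (is_lim_seq_unique _ _ Hl). simpl.
  apply (is_lim_seq_incr_n u m) in Hl.
  assert (Near : forall p, u m - eps <= u (p + m)%nat <= u m + eps).
  { intros p. specialize (HM m (p + m)%nat ltac:(lia)). apply Rabs_le_between' in HM. lra. }
  assert (L1 : Rbar_le l (u m + eps)).
  { apply (is_lim_seq_le _ (fun _ => u m + eps) l _ (fun p => proj2 (Near p)) Hl).
    apply is_lim_seq_const. }
  assert (L2 : Rbar_le (u m - eps) l).
  { apply (is_lim_seq_le (fun _ => u m - eps) _ _ l (fun p => proj1 (Near p))); auto.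
    apply is_lim_seq_const. }
  simpl in L1, L2. apply Rabs_le. lra.
Qed.

Lemma Cmod_le_Re_Im (z : C) : Cmod z <= Rabs (Re z) + Rabs (Im z).
Proof.
  replace z with (RtoC (Re z) + Ci * RtoC (Im z))%C at 1
    by (apply injective_projections; unfold Re, Im; simpl; ring).
  eapply Rle_trans; [apply Cmod_triangle|]. rewrite Cmod_mult, Cmod_Ci, !Cmod_R. lra.
Qed.

Lemma Clim_near (u : nat -> C) eps M : Ccauchy u ->
  (forall m p, (M <= m <= p)%nat -> Cmod (u p - u m)%C <= eps) ->
  forall m, (M <= m)%nat -> Cmod (Clim u - u m)%C <= 2 * eps.
Proof.
  intros Hc HM m Hm.
  assert (Re_le : forall a b : C, Rabs (Re b - Re a) <= Cmod (b - a)%C).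
  { intros a b. eapply Rle_trans; [|apply re_le_Cmod]. right. f_equal. }
  assert (Im_le : forall a b : C, Rabs (Im b - Im a) <= Cmod (b - a)%C).
  { intros a b. eapply Rle_trans; [|apply im_le_Cmod]. right. f_equal. }
  assert (Cauchy_comp : forall F : C -> R, (forall a b, Rabs (F b - F a) <= Cmod (b - a)%C) ->
    forall e, 0 < e -> exists N, forall m p, (N <= m <= p)%nat -> Rabs (F (u p) - F (u m)) <= e).
  { intros F HF e He. destruct (Hc e He) as [N HN]. exists N. intros a b Hab.
    eapply Rle_trans; [apply HF | now apply HN]. }
  eapply Rle_trans; [apply Cmod_le_Re_Im|].
  assert (A1 : Rabs (real (Lim_seq (fun p => Re (u p))) - Re (u m)) <= eps).
  { apply (Lim_seq_near (fun p => Re (u p)) eps M); [exact (Cauchy_comp Re Re_le) | | exact Hm].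
    intros a b Hab. eapply Rle_trans; [apply Re_le | now apply HM]. }
  assert (A2 : Rabs (real (Lim_seq (fun p => Im (u p))) - Im (u m)) <= eps).
  { apply (Lim_seq_near (fun p => Im (u p)) eps M); [exact (Cauchy_comp Im Im_le) | | exact Hm].
    intros a b Hab. eapply Rle_trans; [apply Im_le | now apply HM]. }
  change (Re (Clim u - u m)%C) with (real (Lim_seq (fun p => Re (u p))) - Re (u m)).
  change (Im (Clim u - u m)%C) with (real (Lim_seq (fun p => Im (u p))) - Im (u m)).
  lra.
Qed.

(** * Fourier coefficients and Fourier inversion *)

Lemma eq_of_Cmod_sub_le (a b : C) : (forall eps, 0 < eps -> Cmod (a - b)%C <= eps) -> a = b.
Proof.
  intros H. assert (E : Cmod (a - b)%C = 0).
  { apply Rle_antisym; [|apply Cmod_ge_0]. apply Rnot_lt_le. intros L.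
    specialize (H _ (Rmult_lt_0_compat _ _ L (Rinv_0_lt_compat 2 Rlt_0_2))). lra. }
  apply Cmod_eq_0 in E. replace a with (a - b + b)%C by ring. rewrite E. ring.
Qed.

Section Fourier.
Variable s : scale.
Variable I : (ZS s -> C) -> C.
Hypothesis HI : is_haar_integral s I.

Lemma fourier_at m (h : ZS s -> C) z : In z (dual_at s m) ->
  fourier s I h z = I (fun y => h y * Cconj z ^ zs y m)%C.
Proof.
  intros Hz. apply (haar_ext s I). intros y. rewrite (chi_at s _ m); auto.
  apply Cconj_pow_eq1, In_dual_at, Hz.
Qed.

Lemma fourier_trig_poly m (c : C -> C) w : In w (dual_at s m) ->
  fourier s I (fun y => csum (dual_at s m) (fun z => c z * z ^ zs y m))%C w = c w.
Proof.
  intros Hw. rewrite (fourier_at m) by auto.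
  rewrite <- (haar_csum_pow_zs s I HI m (dual_at s m) c w); auto using dual_at_NoDup.
  - apply (haar_ext s I). intros y. rewrite Cmult_comm, <- csum_scal. apply csum_ext.
    intros z _. rewrite Cpow_mult_l. ring.
  - intros z Hz. now apply In_dual_at.
Qed.

Lemma Cmod_fourier_sub_le (h1 h2 : ZS s -> C) w eps : Zcont s h1 -> Zcont s h2 -> in_dual s w ->
  (forall x, Cmod (h1 x - h2 x)%C <= eps) ->
  Cmod (fourier s I h1 w - fourier s I h2 w)%C <= 2 * eps.
Proof.
  intros H1 H2 [m Hw] Hb. apply In_dual_at in Hw.
  assert (Hc : Zcont s (fun y => Cconj w ^ zs y m)%C) by apply (Zcont_coord s m (Cpow _)).
  rewrite !(fourier_at m), <- haar_minus by auto using Zcont_mult.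
  replace (2 * eps) with (2 * eps * Re (I (fun _ => RtoC 1)))
    by (rewrite (haar_one s I HI); simpl; ring).
  apply (haar_Cmod_le s I HI); auto using Zcont_minus, Zcont_mult, Zcont_const.
  - intros y. split; simpl; lra.
  - intros y. replace (h1 y * _ - h2 y * _)%C with ((h1 y - h2 y) * Cconj w ^ zs y m)%C by ring.
    rewrite Cmod_mult, Cmod_pow_unit; simpl; [rewrite !Rmult_1_r; apply Hb|].
    rewrite Cmod_conj. apply (Cmod_in_dual s). exists m. now apply In_dual_at.
Qed.

End Fourier.

Section FourierInversion.
Variable s : scale.
Variable I : (ZS s -> C) -> C.
Hypothesis HI : is_haar_integral s I.
Variable f : ZS s -> C.
Hypothesis Hf : Zcont s f.

Definition fourier_partial m (x : ZS s) : C :=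
  csum (dual_at s m) (fun z => fourier s I f z * z ^ zs x m)%C.

Definition dirichlet m (x y : ZS s) : C :=
  csum (dual_at s m) (fun z => z ^ zs x m * Cconj z ^ zs y m)%C.

Lemma dirichlet_eq m x y :
  dirichlet m x y = if Nat.eq_dec (zs x m) (zs y m) then RtoC (INR (sc s m)) else RtoC 0.
Proof.
  unfold dirichlet, dual_at, roots_of_unity. rewrite csum_map.
  set (a := zs x m). set (b := zs y m). set (n := sc s m). set (w := unit_root n).
  assert (Ha : (a < n)%nat) by apply zs_lt. assert (Hb : (b < n)%nat) by apply zs_lt.
  assert (Hn : (0 < n)%nat) by apply sc_pos.
  assert (Hw : forall k, Cmod (w ^ k)%C = 1) by (intros; apply Cmod_pow_unit, Cmod_unit_root).
  rewrite (csum_ext _ _ (Cpow (w ^ a * Cconj (w ^ b)))%C).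
  2:{ intros j _. rewrite Cpow_mult_l, !Cpow_conj, <- !Cpow_mult_r, (Nat.mul_comm j a),
        (Nat.mul_comm j b). reflexivity. }
  destruct Nat.eq_dec as [<-|ne].
  - rewrite Cmult_conj_unit by auto.
    rewrite (csum_ext _ _ (fun _ => 1%C)), csum_const, length_seq by (intros; apply Cpow_1_l).
    ring.
  - apply csum_pow_eq1.
    + unfold w.
      rewrite Cpow_mult_l, <- Cpow_conj, <- !Cpow_mult_r, (Nat.mul_comm a n), (Nat.mul_comm b n),
        !Cpow_mult_r, unit_root_pow_n, !Cpow_1_l, Cconj_1 by auto. ring.
    + intros E. apply ne, (unit_root_pow_inj n); auto. now apply Cmult_conj_eq1.
Qed.

Lemma Zcont_dirichlet m x : Zcont s (dirichlet m x).
Proof.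
  apply (Zcont_coord s m (fun k => csum (dual_at s m) (fun z => z ^ zs x m * Cconj z ^ k)%C)).
Qed.

Lemma haar_dirichlet m x : I (dirichlet m x) = RtoC 1.
Proof.
  assert (Sym : forall y, dirichlet m x y = dirichlet m y x).
  { intros y. rewrite !dirichlet_eq. do 2 destruct Nat.eq_dec; auto; congruence. }
  rewrite (haar_ext s I _ _ Sym).
  rewrite <- (Cpow_1_l (zs x m)), <- Cconj_1 at 1.
  rewrite <- (haar_csum_pow_zs s I HI m (dual_at s m) (fun z => Cconj z ^ zs x m)%C 1%C);
    auto using dual_at_NoDup.
  - apply (haar_ext s I). intros y. apply csum_ext. intros z _.
    rewrite Cconj_1, Cmult_1_r. apply Cmult_comm.
  - apply In_dual_at, Cpow_1_l.
  - intros z Hz. now apply In_dual_at.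
Qed.

Lemma fourier_partial_haar m x : fourier_partial m x = I (fun y => f y * dirichlet m x y)%C.
Proof.
  unfold fourier_partial.
  rewrite (csum_ext _ _ (fun z => I (fun y => z ^ zs x m * (f y * Cconj z ^ zs y m)))%C).
  - rewrite <- haar_csum; auto.
    + apply (haar_ext s I). intros y. unfold dirichlet. rewrite <- csum_scal.
      apply csum_ext. intros; ring.
    + intros z _. apply Zcont_scal, Zcont_mult, (Zcont_coord s m (Cpow _)); auto.
  - intros z Hz. rewrite (fourier_at s I m) by auto. rewrite haar_scal; auto; [ring|].
    apply Zcont_mult, (Zcont_coord s m (Cpow _)); auto.
Qed.

(* f(x) = I(f(x) D_m(x, .)) and D_m(x, .) is a nonnegative kernel supported on the
   cylinder of level m around x, where f is within eps/2 of f(x) once m is large. *)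
Lemma fourier_partial_cvg x eps : 0 < eps ->
  exists M, forall m, (M <= m)%nat -> Cmod (fourier_partial m x - f x)%C <= eps.
Proof.
  intros He. destruct (Hf x (eps / 2)) as [m0 Hm0]; [lra|].
  exists m0. intros m Hm.
  rewrite fourier_partial_haar.
  rewrite <- (Cmult_1_r (f x)), <- (haar_dirichlet m x), <- haar_scal, <- haar_minus;
    auto using Zcont_mult, Zcont_dirichlet, Zcont_scal.
  replace eps with (2 * (eps / 2) * Re (I (dirichlet m x)))
    by (rewrite haar_dirichlet; simpl; field).
  apply (haar_Cmod_le s I HI); auto using Zcont_minus, Zcont_mult, Zcont_dirichlet, Zcont_scal.
  - intros y. rewrite dirichlet_eq. destruct Nat.eq_dec; split; simpl; try lra. apply pos_INR.
  - intros y.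
    replace (f y * dirichlet m x y - f x * dirichlet m x y)%C with ((f y - f x) * dirichlet m x y)%C
      by ring.
    rewrite Cmod_mult, dirichlet_eq. destruct Nat.eq_dec as [E|NE]; simpl.
    + rewrite Cmod_R, Rabs_pos_eq by apply pos_INR.
      apply Rmult_le_compat_r; [apply pos_INR|]. left. apply Hm0, (zs_eq_le s x y m0 m); auto.
    + rewrite Cmod_0. lra.
Qed.

End FourierInversion.

Section Coboundary.
Variable s : scale.
Variable lam : C -> R.
Variable I : (ZS s -> C) -> C.
Hypothesis Hlam : is_na_length s lam.
Hypothesis Hgrow : grows_fast s lam.
Hypothesis HI : is_haar_integral s I.
Variable f : ZS s -> C.
Hypothesis Hf : C_RD s I lam f.
Hypothesis Hf0 : I f = RtoC 0.

Definition coboundary_coef (z : C) : C :=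
  if excluded_middle_informative (z = 1%C) then RtoC 0 else (fourier s I f z / (z - 1))%C.

Definition coboundary_partial m (x : ZS s) : C :=
  csum (dual_at s m) (fun z => coboundary_coef z * z ^ zs x m)%C.

Definition coboundary (x : ZS s) : C := Clim (fun m => coboundary_partial m x).

Lemma coboundary_coef_mul z : (coboundary_coef z * (z - 1))%C = fourier s I f z.
Proof.
  unfold coboundary_coef. destruct excluded_middle_informative as [->|Hz].
  - rewrite (fourier_at s I 0) by (apply In_dual_at, Cpow_1_l).
    rewrite (haar_ext s I _ f), Hf0; [ring|]. intros y. rewrite Cconj_1, Cpow_1_l. ring.
  - field. now apply Cminus_1_neq0.
Qed.

Lemma Cmod_coboundary_coef_le : exists (K : nat) (A : R), 0 < A /\ forall z, in_dual s z ->
  Cmod (coboundary_coef z) <= A * (Cmod (fourier s I f z) * lam z ^ K).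
Proof.
  destruct (inv_dist1_le_length_pow s lam Hlam Hgrow) as [K [A [HA Hb]]].
  exists K, A. split; auto. intros z Dz.
  pose proof (length_ge1 s lam Hlam z Dz). assert (0 <= lam z ^ K) by (apply pow_le; lra).
  pose proof (Cmod_ge_0 (fourier s I f z)).
  unfold coboundary_coef. destruct excluded_middle_informative as [_|Hz].
  - rewrite Cmod_0. apply Rmult_le_pos; [lra | now apply Rmult_le_pos].
  - rewrite Cmod_div by now apply Cminus_1_neq0. unfold Rdiv.
    replace (A * _) with (Cmod (fourier s I f z) * (A * lam z ^ K)) by ring.
    apply Rmult_le_compat_l; auto.
Qed.

Definition outside (A : list C) (z : C) : bool :=
  if excluded_middle_informative (In z A) then false else true.

Lemma outside_spec A z : outside A z = true <-> ~ In z A.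
Proof. unfold outside. destruct excluded_middle_informative; split; intuition congruence. Qed.

Lemma coboundary_partial_sub m p x : (m <= p)%nat ->
  (coboundary_partial p x - coboundary_partial m x)%C =
  csum (filter (outside (dual_at s m)) (dual_at s p)) (fun z => coboundary_coef z * z ^ zs x p)%C.
Proof.
  intros Hmp. unfold coboundary_partial.
  rewrite (csum_perm (dual_at s p) (dual_at s m ++ filter (outside (dual_at s m)) (dual_at s p))).
  - rewrite csum_app, (csum_ext (dual_at s m) _ (fun z => coboundary_coef z * z ^ zs x m)%C);
      [ring|].
    intros z Hz. f_equal. apply In_dual_at in Hz. apply Cpow_zs_level; auto.
    now apply (Cpow_sc_le s z m p).
  - apply NoDup_Permutation.
    + apply dual_at_NoDup.
    + apply NoDup_app; [apply dual_at_NoDup | apply NoDup_filter, dual_at_NoDup|].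
      intros a Ha Hf'. apply filter_In in Hf' as [_ Hout]. now apply outside_spec in Hout.
    + intros z. rewrite in_app_iff, filter_In, outside_spec. split.
      * intros Hz. destruct (classic (In z (dual_at s m))); auto.
      * intros [Hz|[Hz _]]; auto. now apply (dual_at_le s m).
Qed.

Lemma coboundary_partial_cauchy eps : 0 < eps -> exists M, forall m p x, (M <= m <= p)%nat ->
  Cmod (coboundary_partial p x - coboundary_partial m x)%C <= eps.
Proof.
  intros He. destruct Cmod_coboundary_coef_le as [K [A [HA Hb]]].
  set (h z := A * (Cmod (fourier s I f z) * lam z ^ K)).
  assert (Hh : dual_summable s h).
  { destruct (proj2 Hf K) as [B HB]. exists (A * B). intros l Nl Dl.
    change (rsum l h <= A * B). unfold h. rewrite rsum_scal.
    apply Rmult_le_compat_l; [lra | now apply HB]. }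
  destruct (dual_summable_tail s h Hh eps He) as [M HM].
  exists M. intros m p x Hm. rewrite coboundary_partial_sub by lia.
  eapply Rle_trans; [apply Cmod_csum_le|]. eapply Rle_trans; [|apply HM].
  - apply rsum_le. intros z Hz. apply filter_In in Hz as [Hz _].
    rewrite Cmod_mult, Cmod_pow_unit, Rmult_1_r; [apply Hb | apply (Cmod_in_dual s)];
      now apply (dual_at_in_dual s p).
  - apply NoDup_filter, dual_at_NoDup.
  - intros z Hz. apply filter_In in Hz as [Hz Hout]. apply outside_spec in Hout.
    split; [now apply (dual_at_in_dual s p)|]. intros HzM. apply Hout, (dual_at_le s M); auto; lia.
Qed.

Lemma coboundary_partial_unif eps : 0 < eps -> exists M, forall m x, (M <= m)%nat ->
  Cmod (coboundary x - coboundary_partial m x)%C <= eps.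
Proof.
  intros He. destruct (coboundary_partial_cauchy (eps / 2)) as [M HM]; [lra|].
  exists M. intros m x Hm. replace eps with (2 * (eps / 2)) by field.
  apply (Clim_near (fun m => coboundary_partial m x) _ M); auto.
  intros e He'. destruct (coboundary_partial_cauchy e He') as [M' HM']. eauto.
Qed.

Lemma Zcont_coboundary_partial m : Zcont s (coboundary_partial m).
Proof.
  apply (Zcont_coord s m (fun k => csum (dual_at s m) (fun z => coboundary_coef z * z ^ k)%C)).
Qed.

Lemma Zcont_coboundary : Zcont s coboundary.
Proof.
  intros x eps He. destruct (coboundary_partial_unif (eps / 4)) as [M HM]; [lra|].
  exists M. intros y E.
  assert (Ey : coboundary_partial M y = coboundary_partial M x)
    by (unfold coboundary_partial; now rewrite E).
  replace (coboundary y - coboundary x)%C with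
    ((coboundary y - coboundary_partial M y) - (coboundary x - coboundary_partial M x))%C
    by (rewrite Ey; ring).
  eapply Rle_lt_trans; [apply Cmod_triangle|]. rewrite Cmod_opp.
  pose proof (HM M y (le_n _)). pose proof (HM M x (le_n _)). lra.
Qed.

Lemma fourier_coboundary w : in_dual s w -> fourier s I coboundary w = coboundary_coef w.
Proof.
  intros [m0 Hw]. apply eq_of_Cmod_sub_le. intros eps He.
  destruct (coboundary_partial_unif (eps / 2)) as [M HM]; [lra|].
  set (m := Nat.max m0 M).
  assert (Hwm : In w (dual_at s m)) by (apply In_dual_at, (Cpow_sc_le s w m0); auto; lia).
  rewrite <- (fourier_trig_poly s I HI m coboundary_coef w Hwm).
  replace eps with (2 * (eps / 2)) by field.
  apply (Cmod_fourier_sub_le s I HI).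
  - exact Zcont_coboundary.
  - exact (Zcont_coboundary_partial m).
  - exists m0; auto.
  - intros y. apply HM. lia.
Qed.

Lemma coboundary_C_RD : C_RD s I lam coboundary.
Proof.
  split; [apply Zcont_coboundary|]. intros N.
  destruct Cmod_coboundary_coef_le as [K [A [HA Hb]]].
  destruct (proj2 Hf (K + N)%nat) as [B HB]. exists (A * B). intros l Nl Dl.
  apply Rle_trans with (rsum l (fun z => A * (Cmod (fourier s I f z) * lam z ^ (K + N)))).
  - apply rsum_le. intros z Hz. rewrite fourier_coboundary, pow_add by auto.
    pose proof (length_ge1 s lam Hlam z (Dl z Hz)). assert (0 <= lam z ^ N) by (apply pow_le; lra).
    apply Rle_trans with (A * (Cmod (fourier s I f z) * lam z ^ K) * lam z ^ N);
      [apply Rmult_le_compat_r; auto | right; ring].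
  - rewrite rsum_scal. apply Rmult_le_compat_l; [lra | now apply HB].
Qed.

Lemma coboundary_partial_phi m x :
  (coboundary_partial m (phi s x) - coboundary_partial m x)%C = fourier_partial s I f m x.
Proof.
  unfold coboundary_partial, fourier_partial. rewrite <- csum_minus. apply csum_ext.
  intros z Hz. rewrite Cpow_zs_phi by now apply In_dual_at.
  rewrite <- coboundary_coef_mul. ring.
Qed.

Lemma coboundary_phi_sub x : f x = (coboundary (phi s x) - coboundary x)%C.
Proof.
  symmetry. apply eq_of_Cmod_sub_le. intros eps He.
  destruct (coboundary_partial_unif (eps / 3)) as [M1 H1]; [lra|].
  destruct (fourier_partial_cvg s I HI f (proj1 Hf) x (eps / 3)) as [M2 H2]; [lra|].
  set (m := Nat.max M1 M2).
  replace (coboundary (phi s x) - coboundary x - f x)%C with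
    ((coboundary (phi s x) - coboundary_partial m (phi s x))
     - (coboundary x - coboundary_partial m x)
     + (fourier_partial s I f m x - f x))%C by (rewrite <- coboundary_partial_phi; ring).
  eapply Rle_trans; [apply Cmod_triangle|].
  eapply Rle_trans; [apply Rplus_le_compat_r, Cmod_triangle|].
  rewrite Cmod_opp.
  pose proof (H1 m (phi s x) ltac:(lia)). pose proof (H1 m x ltac:(lia)).
  pose proof (H2 m ltac:(lia)). lra.
Qed.

End Coboundary.

Theorem mainTheorem9 (s : scale) (lam : C -> R) (I : (ZS s -> C) -> C)
  (Hlam : is_na_length s lam) (Hgrow : grows_fast s lam)
  (HI : is_haar_integral s I) (f : ZS s -> C) (Hf : C_RD s I lam f) :
  I f = RtoC 0 <->
  exists g : ZS s -> C, C_RD s I lam g /\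
    forall x : ZS s, f x = Cminus (g (phi s x)) (g x).
Proof.
  split.
  - intros Hf0. exists (coboundary s I f). split.
    + now apply coboundary_C_RD.
    + now apply (coboundary_phi_sub s lam).
  - intros [g [[Hg _] Hfg]].
    rewrite (haar_ext s I f _ Hfg), haar_minus, haar_phi by auto using Zcont_phi. ring.
Qed.
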